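(* For every $n\ge1$, \[ \ell^\ast(\mathcal{B}_{(2,n)};z)=z(1+z)^{n-1}=\sum_{\substack{0<b<2^n\\ b \text{ odd}}} z^{\operatorname{supp}_2(b)}, \] where $\operatorname{supp}_2(b)$ is the number of $1$'s in the binary representation of $b$.
   Context: $\mathcal{B}_{(2,n)}:=\operatorname{conv}\bigl(e^{(1)},\ldots,e^{(n)},-\sum_{i=1}^n2^{i-1}e^{(i)}\bigr)\subset\mathbb{R}^n$, where $e^{(i)}$ are standard basis vectors. For a lattice simplex $\Delta=\operatorname{conv}(v^{(0)},\ldots,v^{(d)})\subset\mathbb{R}^n$, $\ell^\ast(\Delta;z):=\sum_{x\in\Pi^\circ_\Delta\cap\mathbb{Z}^{n+1}}z^{x_{n+1}}$, where $\Pi^\circ_\Delta:=\{\sum_{i=0}^d\lambda_i(v^{(i)},1):0<\lambda_i<1\}$. *)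

From HB Require Import structures.
From mathcomp Require Import all_boot all_order all_algebra.
From Stdlib Require Import ClassicalEpsilon.
Set Implicit Arguments. Unset Strict Implicit. Unset Printing Implicit Defensive.
Import Order.TTheory GRing.Theory Num.Theory.
Local Open Scope ring_scope.

(* A lattice d-simplex in R^n is given by its d+1 vertices
   V i : 'I_n -> int  (i : 'I_d.+1).  Points of R^(n+1) are functions
   'I_n.+1 -> _, the last coordinate being ord_max. *)

Definition lift_pt (n d : nat) (V : 'I_d.+1 -> 'I_n -> int) (i : 'I_d.+1)
  (j : 'I_n.+1) : int :=
  if unlift ord_max j is Some j' then V i j' else 1.

Definition in_open_pp (n d : nat) (V : 'I_d.+1 -> 'I_n -> int)
  (x : 'I_n.+1 -> int) : Prop :=
  exists lam : 'I_d.+1 -> rat,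
    (forall i, 0 < lam i < 1) /\
    (forall j, (x j)%:~R = \sum_(i < d.+1) lam i * (lift_pt V i j)%:~R).

(* A bound on the sup-norm of every point of Pi°_Delta:
   |x_j| <= sum_i |lift_pt V i j| <= bnd V. *)
Definition bnd (n d : nat) (V : 'I_d.+1 -> 'I_n -> int) : nat :=
  (d.+1 + \sum_(i < d.+1) \sum_(j < n) `|V i j|)%N.

Definition box_pt (n d : nat) (V : 'I_d.+1 -> 'I_n -> int)
  (c : {ffun 'I_n.+1 -> 'I_((bnd V).*2.+1)}) (j : 'I_n.+1) : int :=
  (c j)%:Z - (bnd V)%:Z.

Definition pdec (P : Prop) : bool :=
  if excluded_middle_informative P then true else false.

(* l^*(Delta; z) = sum over x in Pi°_Delta ∩ Z^(n+1) of z^(x_(n+1)).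
   Every such x lies in the box, and distinct c give distinct points,
   so this sum is exactly the sum over Pi°_Delta ∩ Z^(n+1). *)
Definition ell_star (n d : nat) (V : 'I_d.+1 -> 'I_n -> int) : {poly int} :=
  \sum_(c : {ffun 'I_n.+1 -> 'I_((bnd V).*2.+1)} | pdec (in_open_pp V (box_pt c)))
     'X^(absz (box_pt c ord_max)).

(* vertices of B_(2,n): e^(1),...,e^(n), - sum_i 2^(i-1) e^(i)  (0-indexed: 2^j) *)
Definition Bvert (n : nat) : 'I_n.+1 -> 'I_n -> int :=
  fun i j => if unlift ord_max i is Some i' then ((i' == j) : nat)%:Z
             else - (2 ^ j)%:Z.

(* number of 1's in the binary representation of b (bits 0..b suffice) *)
Definition supp2 (b : nat) : nat := \sum_(i < b.+1) odd (b %/ 2 ^ i).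
Arguments Bvert : clear implicits.

(* A point of the open parallelepiped is x = sum_i lam_i (v^(i), 1) with 0 < lam_i < 1.
   Writing mu for the weight of the apex -sum_j 2^j e^(j), the coordinates are
   x_j = lam_j - 2^j mu, so lam_j is the fractional part of 2^j mu and
   k := 2^n mu = x_n - sum_j x_j is an integer in (0, 2^n); positivity of the weight
   of e^(n-1), the fractional part of k/2, forces k to be odd.  Conversely every odd
   k < 2^n gives such a point, with x_j = -floor(k / 2^(n-j)) and, by Legendre's
   formula k - sum_(i>=1) floor(k/2^i) = supp_2(k), last coordinate supp_2(k).
   Hence l^* is the generating function of the binary digit sums of the odd numbers
   below 2^n, which is z(1+z)^(n-1) since each of the n-1 free bits contributes 1+z. *)
From HB Require Import structures.
From mathcomp Require Import all_boot all_order all_algebra.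
From mathcomp Require Import ring lra zify.
From Stdlib Require Import ClassicalEpsilon.
Import Order.TTheory GRing.Theory Num.Theory.
Set Implicit Arguments. Unset Strict Implicit. Unset Printing Implicit Defensive.
Local Open Scope ring_scope.

Lemma sum_bits_widen b m1 m2 : (b < 2 ^ m1)%N -> (m1 <= m2)%N ->
  (\sum_(i < m2) odd (b %/ 2 ^ i) = \sum_(i < m1) odd (b %/ 2 ^ i))%N.
Proof.
move=> hb hm; rewrite (big_ord_widen m2 (fun i => nat_of_bool (odd (b %/ 2 ^ i))) hm).
rewrite [RHS]big_mkcond /=.
apply: eq_bigr => i _; case: ltnP => // hi.
by rewrite divn_small // (leq_trans hb) // leq_exp2l.
Qed.

Lemma supp2_bits b m : (b < 2 ^ m)%N -> supp2 b = (\sum_(i < m) odd (b %/ 2 ^ i))%N.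
Proof.
move=> hb; have hb1 : (b < 2 ^ b.+1)%N.
  by rewrite (ltn_trans (ltn_expl b (ltnSn 1))) ?ltn_exp2l.
rewrite /supp2 -(sum_bits_widen hb1 (leq_maxr m b.+1)).
exact: sum_bits_widen (leq_maxl m b.+1).
Qed.

Lemma supp2_0 : supp2 0 = 0%N.
Proof. by rewrite /supp2 big_ord_recl big_ord0. Qed.

Lemma supp2_bit_double (r : bool) a : supp2 (r + a.*2) = (r + supp2 a)%N.
Proof.
have ha : (a < 2 ^ a.+1)%N by rewrite (ltn_trans (ltn_expl a (ltnSn 1))) ?ltn_exp2l.
have hra : (r + a.*2 < 2 ^ a.+2)%N.
  by rewrite expnS mul2n (@leq_trans (a.+1).*2) ?leq_double //; case: r; rewrite doubleS.
rewrite (supp2_bits hra) (supp2_bits ha) big_ord_recl /= expn0 divn1.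
rewrite oddD odd_double addbF oddb; congr addn; apply: eq_bigr => i _.
rewrite /bump /= add1n expnS divnMA -muln2 addnC divnMDl //.
by rewrite (divn_small (_ : r < 2)%N) ?addn0 //; case: (r).
Qed.

Lemma supp2_double a : supp2 a.*2 = supp2 a.
Proof. exact: supp2_bit_double false a. Qed.

Lemma supp2_double_add1 a : supp2 (1 + a.*2) = (supp2 a).+1.
Proof. exact: supp2_bit_double true a. Qed.

Lemma supp2_add_sum_div k n : (k < 2 ^ n)%N ->
  (supp2 k + \sum_(i < n) k %/ 2 ^ i.+1 = k)%N.
Proof.
elim: n k => [|n IH] k hk.
  by move: hk; rewrite expn0 ltnS leqn0 => /eqP ->; rewrite supp2_0 big_ord0.
have hk2 : (k./2 < 2 ^ n)%N by rewrite -divn2 ltn_divLR // -expnSr.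
rewrite -{1}(odd_double_half k) supp2_bit_double big_ord_recl /= expn1 divn2.
under eq_bigr do rewrite /bump /= add1n expnS divnMA divn2.
have := IH _ hk2; have := odd_double_half k; rewrite -addnn.
by move: (k./2) (supp2 _) (\sum_(i < n) _)%N => h s t; lia.
Qed.

Lemma supp2_add_sum_div_rev k n : (k < 2 ^ n)%N ->
  (supp2 k + \sum_(j < n) k %/ 2 ^ (n - j) = k)%N.
Proof.
move=> hk; rewrite -[RHS](supp2_add_sum_div hk) (reindex_inj rev_ord_inj) /=.
by under eq_bigr do rewrite subKn //.
Qed.

Lemma big_nat_double (R : nmodType) (N : nat) (G : nat -> R) :
  \sum_(0 <= b < (2 * N)%N) G b = \sum_(0 <= a < N) (G a.*2 + G (1 + a.*2)%N).
Proof.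
elim: N => [|N IH]; first by rewrite muln0 !big_geq.
by rewrite mulnS !big_nat_recr //= IH -addrA mul2n add1n.
Qed.

Lemma sum_Xsupp2 (R : nzRingType) m :
  \sum_(0 <= b < (2 ^ m)%N) ('X^(supp2 b) : {poly R}) = (1 + 'X) ^+ m.
Proof.
elim: m => [|m IH]; first by rewrite expn0 big_nat1 supp2_0 expr0.
rewrite expnS big_nat_double exprS -IH big_distrr /=.
by apply: eq_bigr => a _; rewrite supp2_double supp2_double_add1 exprS mulrDl mul1r.
Qed.

Lemma sum_Xsupp2_odd (R : nzRingType) m :
  \sum_(0 <= b < (2 ^ m.+1)%N | (0 < b)%N && odd b) ('X^(supp2 b) : {poly R})
  = 'X * (1 + 'X) ^+ m.
Proof.
rewrite big_mkcond /= expnS big_nat_double -sum_Xsupp2 big_distrr /=.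
apply: eq_bigr => a _; rewrite odd_double andbF add0r.
by rewrite add1n /= -add1n supp2_double_add1 exprS.
Qed.

Lemma sum_exp2 n : ((\sum_(i < n) 2 ^ i).+1 = 2 ^ n)%N.
Proof.
elim: n => [|n IH]; first by rewrite big_ord0.
by rewrite big_ord_recr /= -addSn IH expnS mul2n addnn.
Qed.

Lemma exp2_split n (j : 'I_n) : (2 ^ n = 2 ^ j * 2 ^ (n - j))%N.
Proof. by rewrite -expnD subnKC // ltnW. Qed.

Lemma big_ord_recr_lift (R : nmodType) n (F : 'I_n.+1 -> R) :
  \sum_(i < n.+1) F i = \sum_(i < n) F (lift ord_max i) + F ord_max.
Proof.
rewrite big_ord_recr /=; congr (_ + _); apply: eq_bigr => i _.
by congr F; apply: val_inj; exact: (esym (lift_max i)).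
Qed.

Lemma int_add_frac_in01 (R : realFieldType) (y : int) (r D : nat) : (r < D)%N ->
  0 < (y%:~R + r%:R / D%:R : R) < 1 -> y = 0 /\ (0 < r)%N.
Proof.
move=> hr /andP[h0 h1].
have hD : 0 < D%:R :> R by rewrite ltr0n (leq_ltn_trans (leq0n r) hr).
have f0 : 0 <= r%:R / D%:R :> R by rewrite divr_ge0 // ler0n.
have f1 : r%:R / D%:R < 1 :> R by rewrite ltr_pdivrMr // mul1r ltr_nat.
have [hy|[hy|hy]] : y = 0 \/ 1 <= y \/ y <= -1 by lia.
- by split => //; move: h0; rewrite hy add0r ltr_pdivlMr // mul0r ltr0n.
- have hy1 : 1 <= y%:~R :> R by rewrite ler1z.
  by exfalso; lra.
- have hy1 : y%:~R <= -1 :> R by rewrite -(ler_int R) in hy.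
  by exfalso; lra.
Qed.

Section OpenParallelepiped.

Variable n : nat.

Let N : rat := (2 ^ n)%N%:R.

Lemma N_gt0 : 0 < N.
Proof. by rewrite ltr0n expn_gt0. Qed.

Lemma lift_Bvert_lift (i j : 'I_n) :
  lift_pt (Bvert n) (lift ord_max i) (lift ord_max j) = ((i == j) : nat)%:Z.
Proof. by rewrite /lift_pt /Bvert !liftK. Qed.

Lemma lift_Bvert_apex (j : 'I_n) :
  lift_pt (Bvert n) ord_max (lift ord_max j) = - (2 ^ j)%N%:Z.
Proof. by rewrite /lift_pt /Bvert liftK unlift_none. Qed.

Lemma lift_Bvert_height i : lift_pt (Bvert n) i ord_max = 1.
Proof. by rewrite /lift_pt unlift_none. Qed.

Lemma Bvert_comb_coord (lam : 'I_n.+1 -> rat) (j : 'I_n) :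
  \sum_(i < n.+1) lam i * (lift_pt (Bvert n) i (lift ord_max j))%:~R
  = lam (lift ord_max j) - lam ord_max * (2 ^ j)%N%:R.
Proof.
rewrite big_ord_recr_lift lift_Bvert_apex (bigD1 j) //= big1 => [|i hij].
  by rewrite lift_Bvert_lift eqxx mulr1 addr0 mulrNz mulrN.
by rewrite lift_Bvert_lift (negbTE hij) mulr0.
Qed.

Lemma Bvert_comb_height (lam : 'I_n.+1 -> rat) :
  \sum_(i < n.+1) lam i * (lift_pt (Bvert n) i ord_max)%:~R = \sum_(i < n.+1) lam i.
Proof. by under eq_bigr do rewrite lift_Bvert_height mulr1. Qed.

Definition Bpoint (k : nat) (j : 'I_n.+1) : int :=
  if unlift ord_max j is Some j' then - (k %/ 2 ^ (n - j'))%N%:Z else (supp2 k)%:Z.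

Definition Bweight (k : nat) (i : 'I_n.+1) : rat :=
  if unlift ord_max i is Some i' then (k %% 2 ^ (n - i'))%N%:R / (2 ^ (n - i'))%N%:R
  else k%:R / N.

Lemma Bpoint_lift k (j : 'I_n) : Bpoint k (lift ord_max j) = - (k %/ 2 ^ (n - j))%N%:Z.
Proof. by rewrite /Bpoint liftK. Qed.

Lemma Bpoint_height k : Bpoint k ord_max = (supp2 k)%:Z.
Proof. by rewrite /Bpoint unlift_none. Qed.

Lemma Bweight_lift k (j : 'I_n) :
  Bweight k (lift ord_max j) = (k %% 2 ^ (n - j))%N%:R / (2 ^ (n - j))%N%:R.
Proof. by rewrite /Bweight liftK. Qed.

Lemma Bweight_apex k : Bweight k ord_max = k%:R / N.
Proof. by rewrite /Bweight unlift_none. Qed.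

Lemma apex_weight_scaled k (j : 'I_n) :
  k%:R / N * (2 ^ j)%N%:R
  = (k %/ 2 ^ (n - j))%N%:R + (k %% 2 ^ (n - j))%N%:R / (2 ^ (n - j))%N%:R.
Proof.
have hD : (2 ^ (n - j))%N%:R != 0 :> rat by rewrite pnatr_eq0 -lt0n expn_gt0.
have hP : (2 ^ j)%N%:R != 0 :> rat by rewrite pnatr_eq0 -lt0n expn_gt0.
rewrite /N (exp2_split j) {1}(divn_eq k (2 ^ (n - j))) !natrM natrD natrM.
by field; rewrite hD hP.
Qed.

Lemma Bweight_in01 k i : odd k -> (k < 2 ^ n)%N -> 0 < Bweight k i < 1.
Proof.
move=> ho hk; case: (unliftP ord_max i) => [j ->|->]; last first.
  by rewrite Bweight_apex ltr_pdivlMr ?ltr_pdivrMr ?N_gt0 // mul0r mul1r ltr0n ltr_nat odd_gt0.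
have hD : 0 < (2 ^ (n - j))%N%:R :> rat by rewrite ltr0n expn_gt0.
rewrite Bweight_lift ltr_pdivlMr // ltr_pdivrMr // mul0r mul1r ltr0n ltr_nat.
rewrite ltn_pmod ?expn_gt0 // andbT lt0n; apply: contraTneq ho => h0.
have /dvdn_exp2l h2 : (1 <= n - j)%N by rewrite subn_gt0.
by rewrite -dvdn2 (dvdn_trans (h2 _)) // /dvdn h0.
Qed.

Lemma Bpoint_coord k (j : 'I_n) :
  (Bpoint k (lift ord_max j))%:~R
  = Bweight k (lift ord_max j) - Bweight k ord_max * (2 ^ j)%N%:R.
Proof.
by rewrite Bpoint_lift Bweight_lift Bweight_apex apex_weight_scaled mulrNz; ring.
Qed.

Lemma Bpoint_height_weights k : (k < 2 ^ n)%N ->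
  (Bpoint k ord_max)%:~R = \sum_(i < n.+1) Bweight k i.
Proof.
move=> hk; have hN : N != 0 by rewrite gt_eqF // N_gt0.
rewrite big_ord_recr_lift Bpoint_height Bweight_apex.
under eq_bigr do rewrite Bweight_lift.
have hS : \sum_(j < n) (2 ^ j)%N%:R + 1 = N.
  by rewrite /N -(sum_exp2 n) mulrS addrC natr_sum.
have hk' : (supp2 k)%:R + \sum_(j < n) (k %/ 2 ^ (n - j))%N%:R = k%:R :> rat.
  by rewrite -natr_sum -natrD supp2_add_sum_div_rev.
have hW : \sum_(j < n) (k %% 2 ^ (n - j))%N%:R / (2 ^ (n - j))%N%:R
        = k%:R / N * \sum_(j < n) (2 ^ j)%N%:R - \sum_(j < n) (k %/ 2 ^ (n - j))%N%:R.
  by rewrite mulr_sumr -sumrB; apply: eq_bigr => j _; rewrite apex_weight_scaled addrC addKr.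
have hkN : k%:R / N * \sum_(j < n) (2 ^ j)%N%:R + k%:R / N = k%:R.
  by rewrite -{2}(mulr1 (k%:R / N)) -mulrDr hS divfK.
by rewrite hW addrAC hkN -hk' addrK.
Qed.

Lemma Bpoint_open k : odd k -> (k < 2 ^ n)%N -> in_open_pp (Bvert n) (Bpoint k).
Proof.
move=> ho hk; exists (Bweight k); split; first by move=> i; apply: Bweight_in01.
move=> j; case: (unliftP ord_max j) => [j' ->|->].
  by rewrite Bvert_comb_coord Bpoint_coord.
by rewrite Bvert_comb_height Bpoint_height_weights.
Qed.

Lemma Bpoint_height_sum k : (k < 2 ^ n)%N ->
  Bpoint k ord_max = k%:Z + \sum_(j < n) Bpoint k (lift ord_max j).
Proof.
move=> hk; have hsum : \sum_(j < n) ((k %/ 2 ^ (n - j))%N : int)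
                    = (\sum_(j < n) k %/ 2 ^ (n - j))%N.
  by rewrite -[RHS]natz natr_sum; apply: eq_bigr => j _; rewrite natz.
under eq_bigr do rewrite Bpoint_lift.
by rewrite Bpoint_height sumrN hsum -{2}(supp2_add_sum_div_rev hk) PoszD addrK.
Qed.

Lemma open_pp_apex_weight x (lam : 'I_n.+1 -> rat) :
  (forall j, (x j)%:~R = \sum_(i < n.+1) lam i * (lift_pt (Bvert n) i j)%:~R) ->
  (x ord_max - \sum_(j < n) x (lift ord_max j))%:~R = lam ord_max * N.
Proof.
move=> hx; rewrite rmorphB rmorph_sum /= hx Bvert_comb_height big_ord_recr_lift.
under [X in _ - X]eq_bigr do rewrite hx Bvert_comb_coord.
by rewrite sumrB /N -(sum_exp2 n) mulrS natr_sum -mulr_sumr; ring.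
Qed.

Lemma open_pp_Bpoint x : (0 < n)%N -> in_open_pp (Bvert n) x ->
  exists2 k, odd k && (k < 2 ^ n)%N & forall j, x j = Bpoint k j.
Proof.
move=> hn [lam [hlam hx]].
set K := x ord_max - \sum_(j < n) x (lift ord_max j).
have hK : K%:~R = lam ord_max * N := open_pp_apex_weight hx.
have /andP[mu0 mu1] := hlam ord_max.
have hK0 : 0 <= K by rewrite -(ler_int rat) hK mulr_ge0 ?ltW ?N_gt0.
have hKN : K < (2 ^ n)%N by rewrite -(ltr_int rat) hK gtr_pMl ?N_gt0.
pose k := `|K|%N; have eK : K = k by rewrite /k gez0_abs.
have hk : (k < 2 ^ n)%N by rewrite -ltz_nat -eK.
have hmu : lam ord_max = k%:R / N.
  by rewrite -[k%:R]/((k%:Z)%:~R : rat) -eK hK mulfK // gt_eqF ?N_gt0.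
have hxj (j : 'I_n) :
    x (lift ord_max j) = Bpoint k (lift ord_max j) /\ (0 < k %% 2 ^ (n - j))%N.
  have hl : lam (lift ord_max j) = (x (lift ord_max j) + (k %/ 2 ^ (n - j))%N)%:~R
                                   + (k %% 2 ^ (n - j))%N%:R / (2 ^ (n - j))%N%:R.
    move: (hx (lift ord_max j)).
    by rewrite Bvert_comb_coord hmu apex_weight_scaled intrD => ->; ring.
  have := hlam (lift ord_max j); rewrite hl.
  case/(int_add_frac_in01 (ltn_pmod _ (expn_gt0 2 _))) => hy hr.
  by split => //; rewrite Bpoint_lift; lia.
exists k.
  have hn1 : (n.-1 < n)%N by rewrite ltn_predL.
  have [_] := hxj (Ordinal hn1).
  by rewrite hk andbT /= (_ : n - n.-1 = 1)%N ?expn1 ?modn2 ?lt0b //; lia.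
move=> j; case: (unliftP ord_max j) => [j' ->|->]; first exact: (hxj j').1.
by rewrite Bpoint_height_sum // -eK (eq_bigr _ (fun j _ => esym (hxj j).1)) subrK.
Qed.

Lemma Bpoint_inj k1 k2 : (k1 < 2 ^ n)%N -> (k2 < 2 ^ n)%N ->
  (forall j, Bpoint k1 j = Bpoint k2 j) -> k1 = k2.
Proof.
move=> hk1 hk2 e; apply/eqP; rewrite -eqz_nat; apply/eqP.
have hsum : \sum_(j < n) Bpoint k1 (lift ord_max j) = \sum_(j < n) Bpoint k2 (lift ord_max j).
  by apply: eq_bigr => j _; exact: e.
by have := Bpoint_height_sum hk1; rewrite e (Bpoint_height_sum hk2) hsum => /addIr ->.
Qed.

Lemma Bpoint_abs_le k j : (k < 2 ^ n)%N -> (`|Bpoint k j| <= k)%N.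
Proof.
move=> hk; case: (unliftP ord_max j) => [j' ->|->].
  by rewrite Bpoint_lift abszN absz_nat leq_div.
by rewrite Bpoint_height absz_nat -{2}(supp2_add_sum_div_rev hk) leq_addr.
Qed.

Lemma exp2_le_bnd : (2 ^ n <= bnd (Bvert n))%N.
Proof.
rewrite /bnd -(sum_exp2 n) (big_ord_recr n) /=.
have -> : (\sum_(j < n) `|Bvert n ord_max j| = \sum_(j < n) 2 ^ j)%N.
  by apply: eq_bigr => j _; rewrite /Bvert unlift_none abszN absz_nat.
by rewrite addnC addnS ltnS (leq_trans (leq_addl _ _) (leq_addr _ _)).
Qed.

Definition box_code (k : nat) : {ffun 'I_n.+1 -> 'I_((bnd (Bvert n)).*2.+1)} :=
  [ffun j => inord `|Bpoint k j + (bnd (Bvert n))%:Z|].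

Lemma box_pt_code k j : (k < 2 ^ n)%N -> box_pt (box_code k) j = Bpoint k j.
Proof.
move=> hk; have := leq_trans (Bpoint_abs_le j hk) (leq_trans (ltnW hk) exp2_le_bnd).
rewrite /box_pt ffunE; move: (bnd _) (Bpoint k j) => B p hpB.
by rewrite inordK; lia.
Qed.

Lemma box_pt_inj (c1 c2 : {ffun 'I_n.+1 -> 'I_((bnd (Bvert n)).*2.+1)}) :
  (forall j, box_pt c1 j = box_pt c2 j) -> c1 = c2.
Proof.
move=> h; apply/ffunP => j; apply: val_inj; move/eqP: (h j).
by rewrite /box_pt (inj_eq (addIr _)) eqz_nat => /eqP.
Qed.

End OpenParallelepiped.

Lemma pdecP (P : Prop) : reflect P (pdec P).
Proof. by rewrite /pdec; case: excluded_middle_informative => h; constructor. Qed.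

Lemma ell_star_Bvert n : (0 < n)%N ->
  ell_star (Bvert n)
  = \sum_(0 <= b < (2 ^ n)%N | (0 < b)%N && odd b) ('X^(supp2 b) : {poly int}).
Proof.
move=> hn; pose A := [set k : 'I_(2 ^ n) | odd k].
have hcodes (c : {ffun 'I_n.+1 -> 'I_((bnd (Bvert n)).*2.+1)}) :
    pdec (in_open_pp (Bvert n) (box_pt c)) = (c \in [set box_code n k | k : 'I_(2 ^ n) in A]).
  apply/pdecP/imsetP => [/(open_pp_Bpoint hn) [k /andP[ho hk] hx]|].
    by exists (Ordinal hk); rewrite ?inE //; apply: box_pt_inj => j; rewrite box_pt_code.
  case=> k; rewrite inE => ho ->; have [lam [hl hx]] := Bpoint_open ho (ltn_ord k).
  by exists lam; split => // j; rewrite box_pt_code.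
rewrite /ell_star (eq_bigl _ _ hcodes) big_imset /=; last first.
  move=> k1 k2 _ _ e; apply/val_inj/(Bpoint_inj (ltn_ord k1) (ltn_ord k2)) => j.
  by rewrite -!box_pt_code // e.
rewrite big_mkord; apply: eq_big => k; first by rewrite inE andb_idl // => /odd_gt0.
by rewrite box_pt_code // Bpoint_height absz_nat.
Qed.

Theorem mainTheorem10 (n : nat) (hn : (1 <= n)%N) :
  ell_star (Bvert n) = 'X * (1 + 'X) ^+ (n - 1)%N /\
  'X * (1 + 'X) ^+ (n - 1)%N =
    \sum_(0 <= b < (2 ^ n)%N | (0 < b)%N && odd b) ('X^(supp2 b) : {poly int}).
Proof.
have hsum : 'X * (1 + 'X) ^+ (n - 1)%N =
    \sum_(0 <= b < (2 ^ n)%N | (0 < b)%N && odd b) ('X^(supp2 b) : {poly int}).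
  by case: n hn => // m _; rewrite subSS subn0 sum_Xsupp2_odd.
by split; rewrite ?(ell_star_Bvert hn) hsum.
Qed.
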